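(* Let $0<t_1\le t_2\le\cdots$ be real numbers with $c=\sum_{n=1}^{\infty}t_n^{-2}<\infty$, let $g(t)=\prod_{n=1}^{\infty}\left(1-\frac{t^{2}}{t_n^{2}}\right)$, and let $0\le\beta<1$. Then for every $p>0$, \[ \int_{0}^{\infty}\frac{|g(t)|^{p}}{t^{\beta}}\,dt\;\ge\;\frac{1}{2c^{(1-\beta)/2}}\,\frac{\Gamma(p+1)\,\Gamma\!\left(\frac{1-\beta}{2}\right)}{\Gamma\!\left(\frac{1-\beta}{2}+p+1\right)} \] (the left side possibly being $+\infty$), and consequently \[ \liminf_{p\to\infty}p^{\frac{1-\beta}{2}}\int_{0}^{\infty}\frac{|g(t)|^{p}}{t^{\beta}}\,dt\;\ge\;\frac{\Gamma\!\left(\frac{1-\beta}{2}\right)}{2c^{(1-\beta)/2}}. \]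
   Context: $\Gamma$ denotes the gamma function. *)

From Stdlib Require Import Reals Lra ClassicalEpsilon.
Open Scope R_scope.

(* x^p for real p > 0 and x >= 0, with the convention 0^p = 0
   (Stdlib's Rpower 0 p would give exp (p * ln 0) = 1). *)
Definition rpow (x p : R) : R :=
  match Rlt_dec 0 x with left _ => Rpower x p | right _ => 0 end.

(* Partial products  prod_{n=0}^{N} (1 - x^2 / s_n^2)  (s_0 plays t_1). *)
Fixpoint partial_prod (s : nat -> R) (x : R) (N : nat) : R :=
  match N with
  | O => 1 - x ^ 2 / (s O) ^ 2
  | S M => partial_prod s x M * (1 - x ^ 2 / (s (S M)) ^ 2)
  end.

Definition compact_ints (f : R -> R) (y : R) : Prop :=
  exists (a b : R) (pr : Riemann_integrable f a b),
    0 < a <= b /\ y = RiemannInt pr.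

(* For a nonnegative f, locally Riemann integrable on (0,oo), the (Lebesgue /
   improper) integral over (0,oo) is the supremum of its integrals over
   compact subintervals.  [has_int0inf f l] : this integral is finite = l. *)
Definition has_int0inf (f : R -> R) (l : R) : Prop :=
  (forall a b, 0 < a <= b -> inhabited (Riemann_integrable f a b)) /\
  is_lub (compact_ints f) l.

(* "int_0^oo f > M" (the integral possibly being +oo): some compact
   subinterval integral already exceeds M. *)
Definition int0inf_gt (f : R -> R) (M : R) : Prop :=
  exists y, compact_ints f y /\ M < y.

Definition Gamma (s : R) : R :=
  epsilon (inhabits 0)
    (fun l => has_int0inf (fun x => Rpower x (s - 1) * exp (- x)) l).

From Stdlib Require Import Reals ClassicalEpsilon Lra Lia Classical.
From Coquelicot Require Import Coquelicot.
Open Scope R_scope.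

(** For 0 < t < 1/sqrt c every factor of the product lies in [0, 1], so that
    g t >= 1 - sum_n t^2 / t_n^2 = 1 - c t^2.  Substituting u = c t^2 turns
    int_0^(1/sqrt c) (1 - c t^2)^p t^(-beta) dt into B(a, p + 1) / (2 c^a) with
    a = (1 - beta) / 2, and B(a, p + 1) = Gamma(p + 1) Gamma(a) / Gamma(a + p + 1).
    The Beta-Gamma relation is obtained from the recurrence
    (z + m) B(z, m + 1) = m B(z, m) together with m^z B(z, m) -> Gamma(z), and the
    same limit gives the asymptotic bound. *)

(** * Improper integrals over an interval *)

Lemma ball_R_iff (x e y : R) : @ball R_UniformSpace x e y <-> Rabs (y - x) < e.
Proof. unfold ball; simpl; unfold AbsRing_ball, abs, minus, plus, opp; simpl. tauto. Qed.

Lemma ball_R_bounds (x e y : R) : @ball R_UniformSpace x e y -> x - e < y < x + e.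
Proof. intros H. change (Rabs (y - x) < e) in H. apply Rabs_def2 in H. lra. Qed.

(* An interval D whose left end is approached along Fa and right end along Fb;
   improper integrals over D are then limits of RInt along filter_prod Fa Fb. *)
Record interval_ends (D : R -> Prop) (Fa Fb : (R -> Prop) -> Prop) : Prop := {
  ends_convex : forall a b x, D a -> D b -> a <= x <= b -> D x;
  ends_left : forall a0, D a0 -> Fa (fun a => D a /\ a <= a0);
  ends_right : forall b0, D b0 -> Fb (fun b => D b /\ b0 <= b);
  ends_inhabited : exists d, D d }.

Section IntervalEnds.

Context {D : R -> Prop} {Fa Fb : (R -> Prop) -> Prop}.
Context {FA : ProperFilter Fa} {FB : ProperFilter Fb}.
Hypothesis HD : interval_ends D Fa Fb.

Lemma interval_ends_prod :
  filter_prod Fa Fb (fun ab => D (fst ab) /\ D (snd ab) /\ fst ab <= snd ab).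
Proof.
  destruct HD as [_ HA HB [d Hd]].
  apply Filter_prod with (fun a => D a /\ a <= d) (fun b => D b /\ d <= b); auto.
  intros x y [? ?] [? ?]; simpl; repeat split; auto; lra.
Qed.

Lemma interval_ends_outside a b :
  D a -> D b ->
  filter_prod Fa Fb (fun ab => D (fst ab) /\ fst ab <= a /\ D (snd ab) /\ b <= snd ab).
Proof.
  intros Ha Hb. destruct HD as [_ HA HB _].
  apply Filter_prod with (fun x => D x /\ x <= a) (fun x => D x /\ b <= x); auto.
  intros; simpl; tauto.
Qed.

Lemma interval_ends_between a b x : D a -> D b -> Rmin a b <= x <= Rmax a b -> D x.
Proof.
  intros Ha Hb Hx. destruct HD as [HC _ _ _].
  unfold Rmin, Rmax in Hx; destruct (Rle_dec a b).
  - exact (HC a b x Ha Hb Hx).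
  - apply (HC b a x Hb Ha); lra.
Qed.

Section Integrand.

Variable f : R -> R.
Hypothesis f_cont : forall x, D x -> continuous f x.
Hypothesis f_ge0 : forall x, D x -> 0 <= f x.

Lemma ex_RInt_interval_ends a b : D a -> D b -> ex_RInt f a b.
Proof.
  intros Ha Hb. apply (ex_RInt_continuous (V := R_CompleteNormedModule)).
  intros z Hz. apply f_cont, (interval_ends_between a b); auto.
Qed.

Lemma RInt_interval_ends_mono a b a' b' :
  D a' -> D b' -> a' <= a -> a <= b -> b <= b' -> RInt f a b <= RInt f a' b'.
Proof.
  intros Ha' Hb' h1 h2 h3.
  assert (HC := ends_convex _ _ _ HD).
  assert (Da : D a) by (apply (HC a' b'); auto; lra).
  assert (Db : D b) by (apply (HC a' b'); auto; lra).
  rewrite <- (RInt_Chasles f a' a b') by (apply ex_RInt_interval_ends; auto).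
  rewrite <- (RInt_Chasles f a b b') by (apply ex_RInt_interval_ends; auto).
  assert (0 <= RInt f a' a).
  { apply RInt_ge_0; auto; [apply ex_RInt_interval_ends; auto|].
    intros x hx; apply f_ge0, (HC a' b'); auto; lra. }
  assert (0 <= RInt f b b').
  { apply RInt_ge_0; auto; [apply ex_RInt_interval_ends; auto|].
    intros x hx; apply f_ge0, (HC a' b'); auto; lra. }
  simpl; unfold plus; simpl. lra.
Qed.

Lemma is_RInt_gen_approx l M :
  is_RInt_gen f Fa Fb l -> M < l -> exists a b, D a /\ D b /\ a <= b /\ M < RInt f a b.
Proof.
  intros Hl hM.
  assert (he : 0 < l - M) by lra.
  assert (Hl' := proj1 (filterlimi_locally _ _) Hl (mkposreal _ he)).
  destruct (filter_ex _ (filter_and _ _ interval_ends_prod Hl'))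
    as [[a b] [[h1 [h2 h3]] [z [Hi Hz]]]].
  simpl in *. apply (is_RInt_unique (V := R_CompleteNormedModule)) in Hi. subst z.
  apply ball_R_bounds in Hz. simpl in Hz.
  exists a, b; repeat split; auto; lra.
Qed.

Lemma is_RInt_gen_le_ub l X :
  is_RInt_gen f Fa Fb l -> (forall a b, D a -> D b -> a <= b -> RInt f a b <= X) -> l <= X.
Proof.
  intros Hl HX. apply Rnot_lt_le; intro h.
  destruct (is_RInt_gen_approx l X Hl h) as [a [b [Ha [Hb [hab Hab]]]]].
  specialize (HX a b Ha Hb hab); lra.
Qed.

Lemma RInt_le_is_RInt_gen l a b :
  is_RInt_gen f Fa Fb l -> D a -> D b -> a <= b -> RInt f a b <= l.
Proof.
  intros Hl Ha Hb hab. apply Rnot_lt_le; intro h.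
  assert (he : 0 < RInt f a b - l) by lra.
  assert (Hl' := proj1 (filterlimi_locally _ _) Hl (mkposreal _ he)).
  destruct (filter_ex _ (filter_and _ _ (interval_ends_outside a b Ha Hb) Hl'))
    as [[a' b'] [[h1 [h2 [h3 h4]]] [z [Hi Hz]]]].
  simpl in *. apply (is_RInt_unique (V := R_CompleteNormedModule)) in Hi. subst z.
  apply ball_R_bounds in Hz. simpl in Hz.
  assert (RInt f a b <= RInt f a' b') by (apply RInt_interval_ends_mono; auto).
  lra.
Qed.

(* The improper integral is the supremum of the integrals over compact subintervals. *)
Lemma ex_is_RInt_gen_of_bounded B :
  (forall a b, D a -> D b -> a <= b -> RInt f a b <= B) -> exists l, is_RInt_gen f Fa Fb l.
Proof.
  intros HB.
  set (E := fun y => exists a b, D a /\ D b /\ a <= b /\ y = RInt f a b).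
  assert (bE : bound E) by (exists B; intros y [a [b [? [? [? ->]]]]]; auto).
  assert (nE : exists y, E y).
  { destruct (ends_inhabited _ _ _ HD) as [d Hd]. exists (RInt f d d), d, d; repeat split; auto; lra. }
  destruct (completeness E bE nE) as [l [Hub Hlub]].
  exists l. apply filterlimi_lim_ext_loc with (f := fun ab => RInt f (fst ab) (snd ab)).
  - eapply filter_imp; [|apply interval_ends_prod]. intros [a b] [? [? ?]]; simpl.
    apply (RInt_correct (V := R_CompleteNormedModule)). apply ex_RInt_interval_ends; auto.
  - apply filterlim_locally. intros e.
    assert (exists a0 b0, D a0 /\ D b0 /\ a0 <= b0 /\ l - e < RInt f a0 b0) as [a0 [b0 [? [? [? ?]]]]].
    { apply NNPP; intro Hn. assert (l <= l - e).
      { apply Hlub. intros y [a [b [? [? [? ->]]]]]. apply Rnot_lt_le. intro. apply Hn; eauto 7. }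
      destruct e; simpl in *; lra. }
    apply Filter_prod with (fun x => D x /\ x <= a0) (fun x => D x /\ b0 <= x);
      [apply (ends_left _ _ _ HD); auto | apply (ends_right _ _ _ HD); auto |].
    intros a b [? ?] [? ?]; simpl. apply ball_R_iff; simpl.
    assert (RInt f a0 b0 <= RInt f a b) by (apply RInt_interval_ends_mono; auto; lra).
    assert (RInt f a b <= l) by (apply Hub; exists a, b; repeat split; auto; lra).
    apply Rabs_def1; destruct e; simpl in *; lra.
Qed.

End Integrand.

Lemma is_RInt_gen_antiderivative (F dF : R -> R) la lb :
  (forall x, D x -> is_derive F x (dF x)) -> (forall x, D x -> continuous dF x) ->
  filterlim F Fa (locally la) -> filterlim F Fb (locally lb) ->
  is_RInt_gen dF Fa Fb (lb - la).
Proof.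
  intros Hd Hc Ha Hb.
  apply filterlimi_lim_ext_loc with (f := fun ab => F (snd ab) - F (fst ab)).
  - eapply filter_imp; [|apply interval_ends_prod]. intros [a b] [? [? ?]]; simpl.
    apply (is_RInt_derive (V := R_CompleteNormedModule) F dF a b);
      intros y hy; [apply Hd | apply Hc]; apply (interval_ends_between a b); auto.
  - apply filterlim_locally. intros e.
    assert (he : 0 < e / 2) by (destruct e; simpl; lra).
    assert (Ha' := proj1 (filterlim_locally _ _) Ha (mkposreal _ he)).
    assert (Hb' := proj1 (filterlim_locally _ _) Hb (mkposreal _ he)).
    apply Filter_prod with (1 := Ha') (2 := Hb').
    intros a b h1 h2. apply ball_R_bounds in h1. apply ball_R_bounds in h2. simpl in *.
    change (Rabs ((F b - F a) - (lb - la)) < e). apply Rabs_def1; lra.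
Qed.

End IntervalEnds.

Lemma interval_ends_pos : interval_ends (fun x => 0 < x) (at_right 0) (Rbar_locally p_infty).
Proof.
  split.
  - intros; lra.
  - intros a0 h. exists (mkposreal a0 h). intros y Hy Hy0. apply ball_R_bounds in Hy. simpl in *. lra.
  - intros b0 h. exists b0. intros; lra.
  - exists 1; lra.
Qed.

Lemma interval_ends_01 : interval_ends (fun x => 0 < x < 1) (at_right 0) (at_left 1).
Proof.
  split.
  - intros; lra.
  - intros a0 h. exists (mkposreal a0 (proj1 h)). intros y Hy Hy0. apply ball_R_bounds in Hy. simpl in *. lra.
  - intros b0 h. assert (h1 : 0 < 1 - b0) by lra. exists (mkposreal _ h1).
    intros y Hy Hy0. apply ball_R_bounds in Hy. simpl in *. lra.
  - exists (1/2); lra.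
Qed.

Lemma has_int0inf_of_is_RInt_gen (f : R -> R) l :
  (forall x, 0 < x -> continuous f x) -> (forall x, 0 < x -> 0 <= f x) ->
  is_RInt_gen f (at_right 0) (Rbar_locally p_infty) l -> has_int0inf f l.
Proof.
  intros Hc Hp Hl. split; [|split].
  - intros a b h. constructor. apply ex_RInt_Reals_0, (ex_RInt_interval_ends interval_ends_pos); auto; lra.
  - intros y [a [b [pr [h ->]]]]. rewrite <- RInt_Reals.
    apply (RInt_le_is_RInt_gen interval_ends_pos f Hc Hp); auto; lra.
  - intros u Hu. apply Rnot_lt_le; intro hl.
    destruct (is_RInt_gen_approx interval_ends_pos f l u Hl hl) as [a [b [h1 [h2 [h3 h4]]]]].
    assert (pr : Riemann_integrable f a b)
      by (apply ex_RInt_Reals_0, (ex_RInt_interval_ends interval_ends_pos); auto).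
    assert (compact_ints f (RInt f a b)) by (exists a, b, pr; split; [lra | apply RInt_Reals]).
    specialize (Hu _ H). lra.
Qed.

(** * Real powers *)

Lemma exp_le (x y : R) : x <= y -> exp x <= exp y.
Proof.
  intros h. destruct (Rle_lt_or_eq_dec _ _ h) as [h'|h']; [left; apply exp_increasing; auto | subst; lra].
Qed.

Lemma ln_le_sub1 (x : R) : 0 < x -> ln x <= x - 1.
Proof. intros h. assert (H := exp_ineq1_le (ln x)). rewrite exp_ln in H; lra. Qed.

Lemma ln_1_sub_ge (x : R) : 0 < x < 1 -> - x / (1 - x) <= ln (1 - x).
Proof.
  intros hx. assert (H := ln_le_sub1 (/ (1 - x)) ltac:(apply Rinv_0_lt_compat; lra)).
  rewrite ln_Rinv in H by lra.
  replace (/ (1 - x) - 1) with (x / (1 - x)) in H by (field; lra).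
  replace (- x / (1 - x)) with (- (x / (1 - x))) by (field; lra). lra.
Qed.

Lemma exp_le_1_add_2 d : 0 < d <= 1/2 -> exp d <= 1 + 2 * d.
Proof.
  intros hd. assert (H := exp_ineq1_le (- d)).
  assert (E : exp d = / exp (- d)) by (rewrite exp_Ropp, Rinv_inv; auto).
  rewrite E. apply Rle_trans with (/ (1 - d)).
  - apply Rinv_le_contravar; lra.
  - apply (Rmult_le_reg_r (1 - d)); [lra|]. rewrite Rinv_l by lra. nra.
Qed.

Lemma Rpower_pos (x y : R) : 0 < Rpower x y.
Proof. apply exp_pos. Qed.

Lemma Rpower_1_base (y : R) : Rpower 1 y = 1.
Proof. unfold Rpower. rewrite ln_1, Rmult_0_r. apply exp_0. Qed.

Lemma Rpower_le_1 (x y : R) : 0 < x <= 1 -> 0 <= y -> Rpower x y <= 1.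
Proof.
  intros hx hy. unfold Rpower. rewrite <- exp_0. apply exp_le.
  assert (ln x <= 0) by (rewrite <- ln_1; apply ln_le; lra). nra.
Qed.

Lemma Rpower_ge_base x a : 0 < x <= 1 -> 0 < a <= 1 -> x <= Rpower x a.
Proof.
  intros hx ha. unfold Rpower. rewrite <- (exp_ln x) at 1 by lra. apply exp_le.
  assert (ln x <= 0) by (rewrite <- ln_1; apply ln_le; lra). nra.
Qed.

Lemma is_derive_Rpower (x y : R) : 0 < x -> is_derive (fun t => Rpower t y) x (y * Rpower x (y - 1)).
Proof.
  intros h. unfold Rpower. auto_derive; auto.
  replace ((y - 1) * ln x) with (y * ln x + - ln x) by ring.
  rewrite exp_plus, exp_Ropp, exp_ln; auto. field. lra.
Qed.

Lemma continuous_Rpower (x y : R) : 0 < x -> continuous (fun t => Rpower t y) x.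
Proof.
  intros h. apply (ex_derive_continuous (K := R_AbsRing) (V := R_NormedModule)).
  eexists. apply is_derive_Rpower; auto.
Qed.

Lemma is_RInt_Rpower z a b : 0 < z -> 0 < a -> a <= b ->
  is_RInt (fun t => Rpower t (z - 1)) a b (Rpower b z / z - Rpower a z / z).
Proof.
  intros hz ha hab.
  apply (is_RInt_derive (V := R_CompleteNormedModule) (fun t => Rpower t z / z));
    intros t ht; unfold Rmin in ht; destruct (Rle_dec a b); try lra.
  - unfold Rpower. auto_derive; [lra|].
    replace ((z - 1) * ln t) with (z * ln t + - ln t) by ring.
    rewrite exp_plus, exp_Ropp, exp_ln by lra. field. lra.
  - apply continuous_Rpower. lra.
Qed.

Lemma filterlim_at_right_0_Rpower_bound (F : R -> R) C z : 0 < z -> 0 < C ->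
  (forall t, 0 < t < 1 -> 0 <= F t <= C * Rpower t z) -> filterlim F (at_right 0) (locally 0).
Proof.
  intros hz hC HF. apply filterlim_locally. intros eps.
  set (d := Rmin (Rpower (eps / C) (/ z)) 1).
  assert (hd : 0 < d) by (apply Rmin_pos; [apply Rpower_pos | lra]).
  exists (mkposreal _ hd). intros y Hy Hy0. apply ball_R_bounds in Hy. simpl in Hy.
  assert (d <= Rpower (eps / C) (/ z)) by apply Rmin_l. assert (d <= 1) by apply Rmin_r.
  apply ball_R_iff. specialize (HF y ltac:(lra)).
  assert (Rpower y z < eps / C).
  { replace (eps / C) with (Rpower (Rpower (eps / C) (/ z)) z).
    - apply Rlt_Rpower_l; auto; lra.
    - rewrite Rpower_mult. replace (/ z * z) with 1 by (field; lra).
      apply Rpower_1, Rdiv_lt_0_compat; [apply cond_pos | auto]. }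
  assert (C * Rpower y z < eps).
  { replace (pos eps) with (C * (eps / C)) by (field; lra). apply Rmult_lt_compat_l; auto. }
  rewrite Rminus_0_r, Rabs_right; lra.
Qed.

Lemma filterlim_at_left_1_Rpower_bound (F : R -> R) C m : 0 < m -> 0 < C ->
  (forall t, 0 < t < 1 -> 0 <= F t <= C * Rpower (1 - t) m) -> filterlim F (at_left 1) (locally 0).
Proof.
  intros hm hC HF.
  assert (H0 : filterlim (fun u => F (1 - u)) (at_right 0) (locally 0)).
  { apply (filterlim_at_right_0_Rpower_bound _ C m hm hC). intros t ht.
    assert (Ht := HF (1 - t) ltac:(lra)). replace (1 - (1 - t)) with t in Ht by ring. exact Ht. }
  apply filterlim_locally. intros eps.
  destruct (proj1 (filterlim_locally _ _) H0 eps) as [d Hd].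
  exists d. intros y Hy Hy1. replace y with (1 - (1 - y)) by ring. apply Hd; [|lra].
  change (Rabs (y - 1) < d) in Hy. change (Rabs (1 - y - 0) < d).
  rewrite Rminus_0_r, Rabs_minus_sym. exact Hy.
Qed.

(** * The Gamma function *)

Definition gamma_density (z x : R) : R := Rpower x (z - 1) * exp (- x).

Lemma gamma_density_continuous z x : 0 < x -> continuous (gamma_density z) x.
Proof.
  intros h. apply (ex_derive_continuous (K := R_AbsRing) (V := R_NormedModule)).
  unfold gamma_density, Rpower. auto_derive. auto.
Qed.

Lemma gamma_density_ge_0 z x : 0 <= gamma_density z x.
Proof. apply Rmult_le_pos; left; [apply Rpower_pos | apply exp_pos]. Qed.

(* e^(-t) <= ((z + 1) / e)^(z + 1) (1 + t)^(-(z + 1)), and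
   t^(z - 1) (1 + t)^(-(z + 1)) is the derivative of (t / (1 + t))^z / z. *)
Lemma gamma_density_le z t : 0 < z -> 0 < t ->
  gamma_density z t <=
  exp ((z + 1) * ln (z + 1) - z) * (exp (z * (ln t - ln (1 + t))) / (t * (1 + t))).
Proof.
  intros hz ht.
  replace (exp ((z + 1) * ln (z + 1) - z) * (exp (z * (ln t - ln (1 + t))) / (t * (1 + t))))
    with (exp (((z + 1) * ln (z + 1) - z) + z * (ln t - ln (1 + t)) - ln t - ln (1 + t))).
  2:{ unfold Rminus. rewrite !exp_plus, !exp_Ropp, !exp_ln by lra. field.
      repeat split; try lra; apply Rgt_not_eq, exp_pos. }
  unfold gamma_density, Rpower. rewrite <- exp_plus. apply exp_le.
  assert (L : ln (1 + t) - ln (z + 1) <= (1 + t) / (z + 1) - 1).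
  { rewrite <- ln_div by lra. apply ln_le_sub1, Rdiv_lt_0_compat; lra. }
  assert (L2 : (z + 1) * (ln (1 + t) - ln (z + 1)) <= t - z).
  { replace (t - z) with ((z + 1) * ((1 + t) / (z + 1) - 1)) by (field; lra).
    apply Rmult_le_compat_l; lra. }
  nra.
Qed.

Lemma RInt_gamma_density_le z : 0 < z -> forall a b, 0 < a -> 0 < b -> a <= b ->
  RInt (gamma_density z) a b <= exp ((z + 1) * ln (z + 1) - z) / z.
Proof.
  intros hz a b ha hb hab.
  set (C := exp ((z + 1) * ln (z + 1) - z)).
  set (H := fun t => C * (exp (z * (ln t - ln (1 + t))) / z)).
  set (h := fun t => C * (exp (z * (ln t - ln (1 + t))) / (t * (1 + t)))).
  assert (Hi : is_RInt h a b (H b - H a)).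
  { apply (is_RInt_derive (V := R_CompleteNormedModule) H h a b);
      intros t ht; unfold Rmin in ht; destruct (Rle_dec a b); try lra.
    - unfold H, h. auto_derive; [lra|]. unfold Rminus. field. lra.
    - apply (ex_derive_continuous (K := R_AbsRing) (V := R_NormedModule)).
      unfold h. auto_derive. repeat split; try lra. nra. }
  apply Rle_trans with (RInt h a b).
  { apply RInt_le; auto; [| eexists; exact Hi |].
    - apply (ex_RInt_interval_ends interval_ends_pos); auto. apply gamma_density_continuous.
    - intros t ht. apply gamma_density_le; lra. }
  rewrite (is_RInt_unique _ _ _ _ Hi).
  assert (H b <= C / z).
  { unfold H, Rdiv. rewrite <- Rmult_assoc. apply Rmult_le_compat_r; [left; apply Rinv_0_lt_compat; auto|].
    rewrite <- (Rmult_1_r C) at 2. apply Rmult_le_compat_l; [left; apply exp_pos|].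
    assert (ln b < ln (1 + b)) by (apply ln_increasing; lra).
    apply Rle_trans with (exp 0); [apply exp_le; nra | rewrite exp_0; lra]. }
  assert (0 <= H a).
  { unfold H. apply Rmult_le_pos; [left; apply exp_pos|].
    apply Rmult_le_pos; [left; apply exp_pos | left; apply Rinv_0_lt_compat; auto]. }
  lra.
Qed.

Lemma is_RInt_gen_Gamma z : 0 < z ->
  is_RInt_gen (gamma_density z) (at_right 0) (Rbar_locally p_infty) (Gamma z).
Proof.
  intros hz.
  destruct (ex_is_RInt_gen_of_bounded interval_ends_pos (gamma_density z)
              (gamma_density_continuous z) (fun x _ => gamma_density_ge_0 z x) _
              (RInt_gamma_density_le z hz)) as [l Hl].
  assert (H : has_int0inf (gamma_density z) l).
  { apply has_int0inf_of_is_RInt_gen; auto.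
    - apply gamma_density_continuous.
    - intros x _; apply gamma_density_ge_0. }
  assert (HG : has_int0inf (gamma_density z) (Gamma z)) by (unfold Gamma; apply epsilon_spec; exists l; exact H).
  rewrite (is_lub_u _ _ _ (proj2 HG) (proj2 H)). exact Hl.
Qed.

Lemma RInt_gamma_density_le_Gamma z a b : 0 < z -> 0 < a -> a <= b ->
  RInt (gamma_density z) a b <= Gamma z.
Proof.
  intros hz ha hab.
  apply (RInt_le_is_RInt_gen interval_ends_pos _ (gamma_density_continuous z)
           (fun x _ => gamma_density_ge_0 z x)); [apply is_RInt_gen_Gamma | ..]; auto; lra.
Qed.

Lemma Gamma_ge_0 z : 0 < z -> 0 <= Gamma z.
Proof.
  intros hz. assert (H := RInt_gamma_density_le_Gamma z 1 1 hz Rlt_0_1 (Rle_refl _)).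
  rewrite RInt_point in H. exact H.
Qed.

(** * The Beta integral *)

Definition beta_density (z m u : R) : R := Rpower u (z - 1) * Rpower (1 - u) (m - 1).

(* Junk unless the improper integral converges, which it does for z > 0 and m >= 1. *)
Definition Beta (z m : R) : R := RInt_gen (beta_density z m) (at_right 0) (at_left 1).

Lemma beta_density_continuous z m x : 0 < x < 1 -> continuous (beta_density z m) x.
Proof.
  intros h. apply (ex_derive_continuous (K := R_AbsRing) (V := R_NormedModule)).
  unfold beta_density, Rpower. auto_derive. repeat split; lra.
Qed.

Lemma beta_density_ge_0 z m x : 0 <= beta_density z m x.
Proof. apply Rmult_le_pos; left; apply Rpower_pos. Qed.

Lemma beta_density_le z m x : 0 < x < 1 -> 1 <= m -> beta_density z m x <= Rpower x (z - 1).
Proof.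
  intros h hm. unfold beta_density. rewrite <- (Rmult_1_r (Rpower x (z - 1))) at 2.
  apply Rmult_le_compat_l; [left; apply Rpower_pos | apply Rpower_le_1; lra].
Qed.

Lemma RInt_beta_density_le z m : 0 < z -> 1 <= m ->
  forall a b, 0 < a < 1 -> 0 < b < 1 -> a <= b -> RInt (beta_density z m) a b <= / z.
Proof.
  intros hz hm a b ha hb hab.
  assert (Hi := is_RInt_Rpower z a b hz (proj1 ha) hab).
  apply Rle_trans with (RInt (fun t => Rpower t (z - 1)) a b).
  - apply RInt_le; auto; [| eexists; exact Hi | intros x hx; apply beta_density_le; lra].
    apply (ex_RInt_interval_ends interval_ends_01); auto. apply beta_density_continuous.
  - rewrite (is_RInt_unique _ _ _ _ Hi).
    assert (Rpower b z <= 1) by (apply Rpower_le_1; lra).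
    assert (0 < Rpower a z) by apply Rpower_pos.
    unfold Rdiv. assert (0 < / z) by (apply Rinv_0_lt_compat; auto). nra.
Qed.

Section Beta.

Variables z m : R.
Hypothesis z_pos : 0 < z.
Hypothesis m_ge1 : 1 <= m.

Lemma is_RInt_gen_Beta : is_RInt_gen (beta_density z m) (at_right 0) (at_left 1) (Beta z m).
Proof.
  destruct (ex_is_RInt_gen_of_bounded interval_ends_01 (beta_density z m)
              (beta_density_continuous z m) (fun x _ => beta_density_ge_0 z m x) _
              (RInt_beta_density_le z m z_pos m_ge1)) as [l Hl].
  unfold Beta. rewrite (is_RInt_gen_unique _ _ Hl). exact Hl.
Qed.

Lemma RInt_beta_density_le_Beta a b :
  0 < a < 1 -> 0 < b < 1 -> a <= b -> RInt (beta_density z m) a b <= Beta z m.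
Proof.
  apply (RInt_le_is_RInt_gen interval_ends_01 _ (beta_density_continuous z m)
           (fun x _ => beta_density_ge_0 z m x)), is_RInt_gen_Beta.
Qed.

Lemma Beta_le_ub X :
  (forall a b, 0 < a < 1 -> 0 < b < 1 -> a <= b -> RInt (beta_density z m) a b <= X) ->
  Beta z m <= X.
Proof. apply (is_RInt_gen_le_ub interval_ends_01 _ _ _ is_RInt_gen_Beta). Qed.

Lemma Beta_ge_0 : 0 <= Beta z m.
Proof.
  assert (H := RInt_beta_density_le_Beta (1/2) (1/2) ltac:(lra) ltac:(lra) (Rle_refl _)).
  rewrite RInt_point in H. exact H.
Qed.

End Beta.

Lemma Beta_1 z : 0 < z -> Beta z 1 = / z.
Proof.
  intros hz.
  assert (H : is_RInt_gen (beta_density z 1) (at_right 0) (at_left 1) (/ z - 0)).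
  { apply (is_RInt_gen_antiderivative interval_ends_01 (fun t => Rpower t z / z)).
    - intros t ht. unfold beta_density, Rpower. auto_derive; [lra|].
      replace ((1 - 1) * ln (1 - t)) with 0 by ring. rewrite exp_0.
      replace ((z - 1) * ln t) with (z * ln t + - ln t) by ring.
      rewrite exp_plus, exp_Ropp, exp_ln by lra. field. lra.
    - apply beta_density_continuous.
    - apply (filterlim_at_right_0_Rpower_bound _ (/ z) z hz); [apply Rinv_0_lt_compat; auto|].
      intros t ht. unfold Rdiv. rewrite (Rmult_comm (/ z)). split; [|lra].
      apply Rmult_le_pos; [left; apply Rpower_pos | left; apply Rinv_0_lt_compat; auto].
    - assert (Hc : continuous (fun t => Rpower t z / z) 1).
      { apply (ex_derive_continuous (K := R_AbsRing) (V := R_NormedModule)).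
        unfold Rpower; auto_derive; lra. }
      unfold continuous in Hc; cbv beta in Hc.
      replace (Rpower 1 z / z) with (/ z) in Hc by (rewrite Rpower_1_base; field; lra).
      apply (filterlim_filter_le_1 (F := locally 1)); [apply filter_le_within | exact Hc]. }
  unfold Beta. rewrite (is_RInt_gen_unique _ _ H). ring.
Qed.

(* t^z (1 - t)^m vanishes at both ends and differentiates to
   (z + m) t^(z-1) (1-t)^m - m t^(z-1) (1-t)^(m-1). *)
Lemma Beta_recurrence z m : 0 < z -> 1 <= m -> (z + m) * Beta z (m + 1) = m * Beta z m.
Proof.
  intros hz hm.
  set (dF := fun t => (z + m) * beta_density z (m + 1) t - m * beta_density z m t).
  assert (H1 : is_RInt_gen dF (at_right 0) (at_left 1) (0 - 0)).
  { apply (is_RInt_gen_antiderivative interval_ends_01 (fun t => Rpower t z * Rpower (1 - t) m)).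
    - intros t ht. unfold dF, beta_density, Rpower. auto_derive; [repeat split; lra|].
      replace ((z - 1) * ln t) with (z * ln t + - ln t) by ring.
      replace ((m + 1 - 1) * ln (1 - t)) with (m * ln (1 - t)) by ring.
      replace ((m - 1) * ln (1 - t)) with (m * ln (1 - t) + - ln (1 - t)) by ring.
      rewrite !exp_plus, !exp_Ropp, !exp_ln by lra. unfold Rminus. field. repeat split; lra.
    - intros t ht. apply (ex_derive_continuous (K := R_AbsRing) (V := R_NormedModule)).
      unfold dF, beta_density, Rpower. auto_derive. repeat split; lra.
    - apply (filterlim_at_right_0_Rpower_bound _ 1 z hz Rlt_0_1). intros t ht.
      rewrite Rmult_1_l. split; [apply Rmult_le_pos; left; apply Rpower_pos|].
      rewrite <- (Rmult_1_r (Rpower t z)) at 2.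
      apply Rmult_le_compat_l; [left; apply Rpower_pos | apply Rpower_le_1; lra].
    - apply (filterlim_at_left_1_Rpower_bound _ 1 m ltac:(lra) Rlt_0_1). intros t ht.
      rewrite Rmult_1_l. split; [apply Rmult_le_pos; left; apply Rpower_pos|].
      rewrite Rmult_comm. rewrite <- (Rmult_1_r (Rpower (1 - t) m)) at 2.
      apply Rmult_le_compat_l; [left; apply Rpower_pos | apply Rpower_le_1; lra]. }
  assert (H2 : is_RInt_gen dF (at_right 0) (at_left 1) ((z + m) * Beta z (m + 1) - m * Beta z m)).
  { apply (is_RInt_gen_minus (V := R_NormedModule));
      apply (is_RInt_gen_scal (V := R_NormedModule)), is_RInt_gen_Beta; lra. }
  apply (is_RInt_gen_unique (V := R_CompleteNormedModule)) in H1.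
  apply (is_RInt_gen_unique (V := R_CompleteNormedModule)) in H2.
  rewrite H1 in H2. lra.
Qed.

Fixpoint beta_ratio_prod (z m0 : R) (n : nat) : R :=
  match n with
  | O => 1
  | S k => beta_ratio_prod z m0 k * ((m0 + INR k) / (z + m0 + INR k))
  end.

Lemma Beta_shift_nat z m0 n : 0 < z -> 1 <= m0 ->
  Beta z (m0 + INR n) = Beta z m0 * beta_ratio_prod z m0 n.
Proof.
  intros hz hm. induction n as [|n IH].
  - simpl. rewrite Rplus_0_r. ring.
  - rewrite S_INR. simpl beta_ratio_prod.
    assert (h0 : 0 <= INR n) by apply pos_INR.
    assert (R := Beta_recurrence z (m0 + INR n) hz ltac:(lra)).
    replace (m0 + (INR n + 1)) with (m0 + INR n + 1) by ring.
    apply (Rmult_eq_reg_l (z + (m0 + INR n))); [|lra].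
    rewrite R, IH. field. lra.
Qed.

(** * Asymptotics of m^z B(z, m) and the Beta-Gamma relation *)

Lemma div_lt_swap A e x : 0 < e -> 0 < x -> A / e < x -> A / x < e.
Proof.
  intros he hx H. apply (Rmult_lt_compat_r e) in H; auto.
  unfold Rdiv in *. rewrite Rmult_assoc, Rinv_l, Rmult_1_r in H by lra.
  apply (Rmult_lt_reg_r x); auto. rewrite Rmult_assoc, Rinv_l, Rmult_1_r by lra. lra.
Qed.

Lemma INR_eventually_gt m0 B : exists N, forall n, (N <= n)%nat -> B < m0 + INR n.
Proof.
  assert (H := is_lim_seq_INR). apply is_lim_seq_spec in H. destruct (H (B - m0)) as [N HN].
  exists N. intros n hn. specialize (HN n hn). simpl in HN. lra.
Qed.

Lemma Rpower_1_sub_div_ge y b m : 0 < y <= b -> 2 * b <= m -> 1 <= m ->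
  (1 - 2 * b ^ 2 / m) * exp (- y) <= Rpower (1 - y / m) (m - 1).
Proof.
  intros hy hb hm.
  assert (hx : 0 < y / m < 1).
  { split; [apply Rdiv_lt_0_compat; lra|].
    apply (Rmult_lt_reg_r m); [lra|]. unfold Rdiv; rewrite Rmult_assoc, Rinv_l by lra. lra. }
  set (L := ln (1 - y / m)).
  assert (L0 : L <= 0) by (unfold L; assert (H := ln_le_sub1 (1 - y / m) ltac:(lra)); lra).
  assert (L1 := ln_1_sub_ge (y / m) hx). fold L in L1.
  assert (A1 : m * (- (y / m) / (1 - y / m)) <= m * L) by (apply Rmult_le_compat_l; lra).
  replace (m * (- (y / m) / (1 - y / m))) with (- y - y * y / (m - y)) in A1 by (field; split; lra).
  set (q := y * y / (m - y)) in *.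
  assert (Hq : q <= 2 * b ^ 2 / m).
  { unfold q, Rdiv. apply Rle_trans with (b * b * / (m - y)).
    - apply Rmult_le_compat_r; [left; apply Rinv_0_lt_compat; lra | nra].
    - replace (2 * b ^ 2 * / m) with (b * b * / (m / 2)) by (field; lra).
      apply Rmult_le_compat_l; [nra|]. apply Rinv_le_contravar; lra. }
  assert (Hexp : 1 + - q <= exp (- q)) by apply exp_ineq1_le.
  assert (ey : 0 < exp (- y)) by apply exp_pos.
  unfold Rpower. fold L.
  apply Rle_trans with (exp (- y - q)); [|apply exp_le; nra].
  unfold Rminus at 2. rewrite exp_plus, (Rmult_comm _ (exp (- y))).
  apply Rmult_le_compat_l; lra.
Qed.

Lemma RInt_gamma_density_scale z l a b : 0 < l -> 0 < a -> a <= b ->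
  RInt (gamma_density z) (l * a) (l * b) =
  Rpower l z * RInt (fun y => Rpower y (z - 1) * exp (- (l * y))) a b.
Proof.
  intros hl ha hab.
  rewrite <- (Rplus_0_r (l * a)), <- (Rplus_0_r (l * b)).
  rewrite <- (RInt_comp_lin (V := R_CompleteNormedModule)).
  2:{ rewrite !Rplus_0_r. apply (ex_RInt_interval_ends interval_ends_pos);
      [apply gamma_density_continuous | nra | nra]. }
  rewrite <- (RInt_scal (V := R_CompleteNormedModule)).
  2:{ apply (ex_RInt_continuous (V := R_CompleteNormedModule)). intros t ht.
      apply (ex_derive_continuous (K := R_AbsRing) (V := R_NormedModule)).
      unfold Rpower. auto_derive. unfold Rmin in ht; destruct (Rle_dec a b); lra. }
  apply RInt_ext. intros y hy. unfold Rmin in hy; destruct (Rle_dec a b); try lra.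
  unfold scal, gamma_density; simpl; unfold mult; simpl. unfold Rpower.
  rewrite Rplus_0_r, ln_mult by lra.
  replace (z * ln l) with ((z - 1) * ln l + ln l) by ring.
  rewrite !Rmult_plus_distr_l, !exp_plus, exp_ln by lra. ring.
Qed.

(* (1 - u)^(m - 1) <= e^(-(m - 1) u), then substitute y = (m - 1) u. *)
Lemma Beta_mul_Rpower_le_Gamma z m : 0 < z -> 1 < m -> Beta z m * Rpower (m - 1) z <= Gamma z.
Proof.
  intros hz hm. set (l := m - 1).
  assert (hl : 0 < l) by (unfold l; lra).
  assert (Hpl : 0 < Rpower l z) by apply Rpower_pos.
  enough (Beta z m <= Gamma z / Rpower l z)
    by (apply (Rmult_le_compat_r (Rpower l z)) in H; [|lra]; unfold Rdiv in H;
        rewrite Rmult_assoc, Rinv_l, Rmult_1_r in H by lra; exact H).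
  apply Beta_le_ub; [auto | lra |]. intros a b ha hb hab.
  set (g1 := fun y => Rpower y (z - 1) * exp (- (l * y))).
  apply Rle_trans with (RInt g1 a b).
  - apply RInt_le; auto.
    + apply (ex_RInt_interval_ends interval_ends_01); auto. apply beta_density_continuous.
    + apply (ex_RInt_continuous (V := R_CompleteNormedModule)). intros t ht.
      apply (ex_derive_continuous (K := R_AbsRing) (V := R_NormedModule)).
      unfold g1, Rpower. auto_derive. unfold Rmin in ht; destruct (Rle_dec a b); lra.
    + intros y hy. unfold beta_density, g1. apply Rmult_le_compat_l; [left; apply Rpower_pos|].
      unfold Rpower. apply exp_le. assert (H := ln_le_sub1 (1 - y) ltac:(lra)).
      unfold l. nra.
  - apply (Rmult_le_reg_l (Rpower l z)); auto.
    replace (Rpower l z * (Gamma z / Rpower l z)) with (Gamma z) by (field; lra).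
    unfold g1. rewrite <- RInt_gamma_density_scale by lra.
    apply RInt_gamma_density_le_Gamma; nra.
Qed.

(* Substitute u = y / m; the integrands compare by Rpower_1_sub_div_ge. *)
Lemma RInt_gamma_density_le_Beta_scaled z m a b : 0 < z -> 0 < a -> a <= b -> 1 <= m -> 2 * b <= m ->
  (1 - 2 * b ^ 2 / m) * RInt (gamma_density z) a b <= Rpower m z * RInt (beta_density z m) (a / m) (b / m).
Proof.
  intros hz ha hab hm hbm.
  assert (Hab : forall x, 0 < x <= b -> 0 < x / m < 1).
  { intros x hx. split; [apply Rdiv_lt_0_compat; lra|].
    apply (Rmult_lt_reg_r m); [lra|]. unfold Rdiv; rewrite Rmult_assoc, Rinv_l by lra. lra. }
  assert (exB : ex_RInt (beta_density z m) (/ m * a + 0) (/ m * b + 0)).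
  { rewrite !Rplus_0_r, !(Rmult_comm (/ m)).
    apply (ex_RInt_interval_ends interval_ends_01); [apply beta_density_continuous | ..]; apply Hab; lra. }
  replace (a / m) with (/ m * a + 0) by (unfold Rdiv; ring).
  replace (b / m) with (/ m * b + 0) by (unfold Rdiv; ring).
  rewrite <- (RInt_comp_lin (V := R_CompleteNormedModule)) by exact exB.
  assert (Hpm : 0 < Rpower m z) by apply Rpower_pos.
  rewrite <- (RInt_scal (V := R_CompleteNormedModule)).
  2:{ apply (ex_RInt_interval_ends interval_ends_pos); [apply gamma_density_continuous | lra | lra]. }
  rewrite <- (RInt_scal (V := R_CompleteNormedModule)) by
    (apply (ex_RInt_comp_lin (beta_density z m) (/ m) 0 a b); exact exB).
  apply RInt_le; auto.
  - apply (ex_RInt_scal (V := R_NormedModule)).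
    apply (ex_RInt_interval_ends interval_ends_pos); [apply gamma_density_continuous | lra | lra].
  - apply (ex_RInt_scal (V := R_NormedModule)).
    apply (ex_RInt_comp_lin (beta_density z m) (/ m) 0 a b); exact exB.
  - intros y hy. unfold scal; simpl; unfold mult; simpl. unfold gamma_density, beta_density.
    rewrite Rplus_0_r.
    assert (E : / m * Rpower (/ m * y) (z - 1) = Rpower y (z - 1) / Rpower m z).
    { unfold Rpower. rewrite ln_mult, ln_Rinv by (try apply Rinv_0_lt_compat; lra).
      replace ((z - 1) * (- ln m + ln y)) with ((z - 1) * ln y + - (z * ln m) + ln m) by ring.
      rewrite !exp_plus, exp_Ropp, exp_ln by lra. field. split; [apply Rgt_not_eq, exp_pos | lra]. }
    assert (KI := Rpower_1_sub_div_ge y b m ltac:(lra) hbm hm).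
    replace (y / m) with (/ m * y) in KI by (unfold Rdiv; ring).
    rewrite <- (Rmult_assoc (/ m)), E.
    assert (0 <= Rpower y (z - 1) / Rpower m z)
      by (unfold Rdiv; apply Rmult_le_pos; [left; apply Rpower_pos | left; apply Rinv_0_lt_compat; auto]).
    replace (Rpower m z * (Rpower y (z - 1) / Rpower m z * Rpower (1 - / m * y) (m - 1)))
      with (Rpower y (z - 1) * Rpower (1 - / m * y) (m - 1)) by (field; lra).
    change (b * (b * 1)) with (b ^ 2).
    replace ((1 - 2 * b ^ 2 / m) * (Rpower y (z - 1) * exp (- y)))
      with (Rpower y (z - 1) * ((1 - 2 * b ^ 2 / m) * exp (- y))) by ring.
    apply Rmult_le_compat_l; [left; apply Rpower_pos | exact KI].
Qed.

Lemma Rpower_Beta_le z m : 0 < z -> 1 + 2 * z <= m ->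
  Rpower m z * Beta z m <= Gamma z * (1 + 2 * (z / (m - 1))).
Proof.
  intros hz hm. set (d := z / (m - 1)).
  assert (hd : 0 < d <= 1/2).
  { unfold d. split; [apply Rdiv_lt_0_compat; lra|].
    apply (Rmult_le_reg_r (m - 1)); [lra|]. unfold Rdiv; rewrite Rmult_assoc, Rinv_l by lra. lra. }
  assert (HB := Beta_mul_Rpower_le_Gamma z m hz ltac:(lra)).
  assert (HB0 : 0 <= Beta z m) by (apply Beta_ge_0; lra).
  assert (Hm : Rpower m z <= Rpower (m - 1) z * (1 + 2 * d)).
  { assert (Hl : z * (ln m - ln (m - 1)) <= d).
    { rewrite <- ln_div by lra. assert (H := ln_le_sub1 (m / (m - 1)) ltac:(apply Rdiv_lt_0_compat; lra)).
      replace (m / (m - 1) - 1) with (1 / (m - 1)) in H by (field; lra).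
      unfold d. replace (z / (m - 1)) with (z * (1 / (m - 1))) by (field; lra).
      apply Rmult_le_compat_l; lra. }
    replace (Rpower m z) with (Rpower (m - 1) z * exp (z * (ln m - ln (m - 1))))
      by (unfold Rpower; rewrite <- exp_plus; f_equal; ring).
    apply Rmult_le_compat_l; [left; apply Rpower_pos|].
    apply Rle_trans with (exp d); [apply exp_le | apply exp_le_1_add_2]; auto. }
  apply Rle_trans with (Rpower (m - 1) z * (1 + 2 * d) * Beta z m); [apply Rmult_le_compat_r; auto|].
  replace (Rpower (m - 1) z * (1 + 2 * d) * Beta z m) with (Beta z m * Rpower (m - 1) z * (1 + 2 * d)) by ring.
  apply Rmult_le_compat_r; lra.
Qed.

Lemma Rpower_Beta_eventually_lt z U : 0 < z -> Gamma z < U ->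
  exists P, forall m, P < m -> Rpower m z * Beta z m < U.
Proof.
  intros hz hU. assert (hG : 0 <= Gamma z) by (apply Gamma_ge_0; auto).
  assert (hP : 0 <= 2 * z * Gamma z / (U - Gamma z))
    by (apply Rmult_le_pos; [nra | left; apply Rinv_0_lt_compat; lra]).
  exists (1 + 2 * z + 2 * z * Gamma z / (U - Gamma z)). intros m hm.
  assert (H := Rpower_Beta_le z m hz ltac:(lra)).
  assert (2 * z * Gamma z / (m - 1) < U - Gamma z) by (apply div_lt_swap; lra).
  replace (Gamma z * (1 + 2 * (z / (m - 1)))) with (Gamma z + 2 * z * Gamma z / (m - 1)) in H
    by (field; lra).
  lra.
Qed.

Lemma Rpower_Beta_eventually_gt z L : 0 < z -> L < Gamma z ->
  exists P, forall m, P < m -> L < Rpower m z * Beta z m.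
Proof.
  intros hz hL.
  destruct (is_RInt_gen_approx interval_ends_pos (gamma_density z) _ L (is_RInt_gen_Gamma z hz) hL)
    as [a [b [ha [hb [hab HG]]]]].
  set (G := RInt (gamma_density z) a b) in *.
  assert (G0 : 0 <= G).
  { apply RInt_ge_0; auto; [|intros; apply gamma_density_ge_0].
    apply (ex_RInt_interval_ends interval_ends_pos); auto. apply gamma_density_continuous. }
  assert (hP : 0 <= 2 * b ^ 2 * G / (G - L))
    by (apply Rmult_le_pos; [nra | left; apply Rinv_0_lt_compat; lra]).
  exists (Rmax 1 (2 * b) + 2 * b ^ 2 * G / (G - L)). intros m hm.
  assert (h1 := Rmax_l 1 (2 * b)). assert (h2 := Rmax_r 1 (2 * b)).
  assert (Hlow := RInt_gamma_density_le_Beta_scaled z m a b hz ha hab ltac:(lra) ltac:(lra)).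
  fold G in Hlow.
  assert (Hbm : RInt (beta_density z m) (a / m) (b / m) <= Beta z m).
  { apply RInt_beta_density_le_Beta; try lra.
    - split; [apply Rdiv_lt_0_compat; lra|].
      apply (Rmult_lt_reg_r m); [lra|]. unfold Rdiv; rewrite Rmult_assoc, Rinv_l by lra. lra.
    - split; [apply Rdiv_lt_0_compat; lra|].
      apply (Rmult_lt_reg_r m); [lra|]. unfold Rdiv; rewrite Rmult_assoc, Rinv_l by lra. lra.
    - unfold Rdiv; apply Rmult_le_compat_r; [left; apply Rinv_0_lt_compat |]; lra. }
  assert (Rpower m z * RInt (beta_density z m) (a / m) (b / m) <= Rpower m z * Beta z m)
    by (apply Rmult_le_compat_l; [left; apply Rpower_pos | exact Hbm]).
  assert (2 * b ^ 2 * G / m < G - L) by (apply div_lt_swap; lra).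
  replace ((1 - 2 * b ^ 2 / m) * G) with (G - 2 * b ^ 2 * G / m) in Hlow by (field; lra).
  lra.
Qed.

Lemma is_lim_seq_Rpower_Beta z m0 : 0 < z ->
  is_lim_seq (fun n => Rpower (m0 + INR n) z * Beta z (m0 + INR n)) (Gamma z).
Proof.
  intros hz. apply is_lim_seq_spec. intros eps.
  assert (he := cond_pos eps).
  destruct (Rpower_Beta_eventually_lt z (Gamma z + eps) hz ltac:(lra)) as [P1 H1].
  destruct (Rpower_Beta_eventually_gt z (Gamma z - eps) hz ltac:(lra)) as [P2 H2].
  destruct (INR_eventually_gt m0 (Rmax P1 P2)) as [N HN].
  exists N. intros n hn. specialize (HN n hn).
  assert (h1 := Rmax_l P1 P2). assert (h2 := Rmax_r P1 P2).
  specialize (H1 (m0 + INR n) ltac:(lra)). specialize (H2 (m0 + INR n) ltac:(lra)).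
  apply Rabs_def1; lra.
Qed.

Lemma is_lim_seq_ratio p q : 0 < q -> is_lim_seq (fun n => (p + INR n) / (q + INR n)) 1.
Proof.
  intros hq. apply is_lim_seq_spec. intros eps.
  assert (he := cond_pos eps).
  destruct (INR_eventually_gt q (Rabs (p - q) / eps)) as [N HN].
  exists N. intros n hn. specialize (HN n hn).
  assert (h0 : 0 <= INR n) by apply pos_INR.
  replace ((p + INR n) / (q + INR n) - 1) with ((p - q) / (q + INR n)) by (field; lra).
  unfold Rdiv. rewrite Rabs_mult, Rabs_inv by lra. rewrite (Rabs_right (q + INR n)) by lra.
  apply div_lt_swap; auto; lra.
Qed.

Lemma is_lim_seq_Rpower_ratio p q a : 0 < q -> is_lim_seq (fun n => Rpower ((p + INR n) / (q + INR n)) a) 1.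
Proof.
  intros hq.
  assert (Hc : continuity_pt (fun x => Rpower x a) 1)
    by (apply continuity_pt_filterlim, continuous_Rpower; lra).
  assert (H := is_lim_seq_continuous (fun x => Rpower x a) _ 1 Hc (is_lim_seq_ratio p q hq)).
  cbv beta in H. rewrite Rpower_1_base in H. exact H.
Qed.

Lemma beta_ratio_prod_add a w n : 0 < a -> 1 <= w ->
  beta_ratio_prod (a + w) 1 n * w * (a + w + INR n) =
  beta_ratio_prod w 1 n * beta_ratio_prod a w n * (w + INR n) * (a + w).
Proof.
  intros ha hw. induction n as [|n IH].
  - simpl. ring.
  - assert (h0 : 0 <= INR n) by apply pos_INR.
    simpl beta_ratio_prod. rewrite S_INR.
    replace (beta_ratio_prod (a + w) 1 n)
      with (beta_ratio_prod w 1 n * beta_ratio_prod a w n * (w + INR n) * (a + w) / (w * (a + w + INR n)))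
      by (rewrite <- IH; field; lra).
    field. repeat split; lra.
Qed.

(* By Beta_shift_nat, (w+n)^a B(a,w+n) * (1+n)^w B(w,1+n) equals B(a,w) times
   (1+n)^(a+w) B(a+w,1+n) up to factors tending to 1; pass to the limit. *)
Lemma Beta_Gamma a w : 0 < a -> 1 <= w -> Beta a w * Gamma (a + w) = Gamma a * Gamma w.
Proof.
  intros ha hw.
  assert (P1 := is_lim_seq_mult' _ _ _ _ (is_lim_seq_Rpower_Beta a w ha)
                  (is_lim_seq_Rpower_Beta w 1 ltac:(lra))).
  assert (P2 := is_lim_seq_scal_l _ (Beta a w) _
                  (is_lim_seq_mult' _ _ _ _
                     (is_lim_seq_mult' _ _ _ _ (is_lim_seq_Rpower_Beta (a + w) 1 ltac:(lra))
                        (is_lim_seq_Rpower_ratio w 1 a Rlt_0_1))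
                     (is_lim_seq_ratio (a + w) w ltac:(lra)))).
  assert (Eq : forall n,
    Rpower (w + INR n) a * Beta a (w + INR n) * (Rpower (1 + INR n) w * Beta w (1 + INR n)) =
    Beta a w * (Rpower (1 + INR n) (a + w) * Beta (a + w) (1 + INR n) *
                Rpower ((w + INR n) / (1 + INR n)) a * ((a + w + INR n) / (w + INR n)))).
  { intros n. assert (h0 : 0 <= INR n) by apply pos_INR.
    rewrite (Beta_shift_nat a w n ha hw), (Beta_shift_nat w 1 n ltac:(lra) (Rle_refl 1)),
      (Beta_shift_nat (a + w) 1 n ltac:(lra) (Rle_refl 1)), !Beta_1, Rpower_plus by lra.
    replace (Rpower (w + INR n) a) with (Rpower ((w + INR n) / (1 + INR n)) a * Rpower (1 + INR n) a)
      by (rewrite Rpower_mult_distr by (try apply Rdiv_lt_0_compat; lra); f_equal; field; lra).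
    replace (beta_ratio_prod (a + w) 1 n)
      with (beta_ratio_prod w 1 n * beta_ratio_prod a w n * (w + INR n) * (a + w) / (w * (a + w + INR n)))
      by (rewrite <- (beta_ratio_prod_add a w n ha hw); field; lra).
    field. repeat split; lra. }
  apply is_lim_seq_unique in P2.
  rewrite (is_lim_seq_unique _ _ (is_lim_seq_ext _ _ _ Eq P1)) in P2.
  injection P2. intros h. rewrite h. ring.
Qed.

Lemma Gamma_ratio_le_Beta a w : 0 < a -> 1 <= w -> Gamma w * Gamma a / Gamma (a + w) <= Beta a w.
Proof.
  intros ha hw.
  destruct (Req_dec (Gamma (a + w)) 0) as [h0|h0].
  - rewrite h0. unfold Rdiv. rewrite Rinv_0, Rmult_0_r. apply Beta_ge_0; lra.
  - assert (G0 := Gamma_ge_0 (a + w) ltac:(lra)).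
    apply (Rmult_le_reg_r (Gamma (a + w))); [lra|].
    unfold Rdiv. rewrite Rmult_assoc, Rinv_l, Rmult_1_r, Beta_Gamma by auto. lra.
Qed.

(** * The Weierstrass product and the moment integral *)

Lemma RInt_comp_sq (f : R -> R) c t1 t2 : 0 < c -> 0 < t1 <= t2 ->
  (forall u, c * t1 ^ 2 <= u <= c * t2 ^ 2 -> continuous f u) ->
  RInt f (c * t1 ^ 2) (c * t2 ^ 2) = RInt (fun y => 2 * c * y * f (c * y ^ 2)) t1 t2.
Proof.
  intros hc ht Hf.
  assert (Hin : forall x, t1 <= x <= t2 -> c * t1 ^ 2 <= c * x ^ 2 <= c * t2 ^ 2)
    by (intros x hx; split; apply Rmult_le_compat_l; try lra; apply pow_incr; lra).
  symmetry. apply is_RInt_unique.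
  apply (is_RInt_comp (V := R_CompleteNormedModule) f (fun t => c * t ^ 2) (fun t => 2 * c * t));
    intros x hx; unfold Rmin, Rmax in hx; destruct (Rle_dec t1 t2); try lra.
  - apply Hf, Hin; lra.
  - split; [auto_derive; auto; ring|].
    apply (ex_derive_continuous (K := R_AbsRing) (V := R_NormedModule)). auto_derive. auto.
Qed.

Lemma rpow_eq_Rpower x p : 0 < x -> rpow x p = Rpower x p.
Proof. intros h. unfold rpow. destruct (Rlt_dec 0 x); [auto | lra]. Qed.

Lemma rpow_continuous p y0 : 0 < y0 -> continuous (fun y => rpow y p) y0.
Proof.
  intros h. apply (continuous_ext_loc _ (fun y => Rpower y p)).
  - exists (mkposreal y0 h). intros y hy. apply ball_R_bounds in hy. simpl in hy.
    symmetry; apply rpow_eq_Rpower; lra.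
  - apply continuous_Rpower; auto.
Qed.

Definition moment_integrand (g : R -> R) (beta p x : R) : R := rpow (Rabs (g x)) p / Rpower x beta.

Definition sum_inv_sq (s : nat -> R) (N : nat) : R := sum_f_R0 (fun n => / (s n) ^ 2) N.

Section WeierstrassProduct.

Variables (s : nat -> R) (c : R) (g : R -> R).
Hypothesis s_pos : forall n, 0 < s n.
Hypothesis sum_c : infinite_sum (fun n => / (s n) ^ 2) c.
Hypothesis prod_g : forall x, Un_cv (partial_prod s x) (g x).

Lemma inv_sq_pos n : 0 < / (s n) ^ 2.
Proof. apply Rinv_0_lt_compat, pow_lt, s_pos. Qed.

Lemma sum_inv_sq_mono N k : sum_inv_sq s N <= sum_inv_sq s (N + k).
Proof.
  induction k.
  - rewrite Nat.add_0_r; lra.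
  - rewrite Nat.add_succ_r. assert (H := inv_sq_pos (S (N + k))).
    change (sum_inv_sq s (S (N + k))) with (sum_inv_sq s (N + k) + / (s (S (N + k))) ^ 2). lra.
Qed.

Lemma sum_inv_sq_le N : sum_inv_sq s N <= c.
Proof.
  apply Rnot_lt_le; intro h.
  destruct (sum_c (sum_inv_sq s N - c)) as [N' HN']; [lra|].
  specialize (HN' (N + N')%nat ltac:(lia)). unfold Rdist in HN'.
  assert (H := sum_inv_sq_mono N N'). apply Rabs_def2 in HN'. unfold sum_inv_sq in *. lra.
Qed.

Lemma inv_sq_le n : / (s n) ^ 2 <= c.
Proof.
  apply Rle_trans with (sum_inv_sq s n); [|apply sum_inv_sq_le].
  destruct n as [|n]; [unfold sum_inv_sq; simpl; lra|].
  assert (H := sum_inv_sq_mono 0 n). assert (H0 := inv_sq_pos 0).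
  change (sum_inv_sq s 0) with (/ (s 0%nat) ^ 2) in H.
  change (sum_inv_sq s (S n)) with (sum_inv_sq s n + / (s (S n)) ^ 2).
  change (0 + n)%nat with n in H. lra.
Qed.

Lemma sum_inv_sq_pos : 0 < c.
Proof. assert (H := inv_sq_le 0). assert (H0 := inv_sq_pos 0). lra. Qed.

Section InsideRadius.

Variable t : R.
Hypothesis t_small : c * t ^ 2 <= 1.

Lemma factor_bounds n : 0 <= t ^ 2 / (s n) ^ 2 <= 1.
Proof.
  assert (H := inv_sq_pos n). assert (t2 : 0 <= t ^ 2) by apply pow2_ge_0.
  assert (hcn := inv_sq_le n). unfold Rdiv. split; [apply Rmult_le_pos; lra|].
  apply Rle_trans with (t ^ 2 * c); [apply Rmult_le_compat_l|]; lra.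
Qed.

Lemma partial_prod_bounds N : (0 <= partial_prod s t N <= 1) /\ 1 - t ^ 2 * sum_inv_sq s N <= partial_prod s t N.
Proof.
  induction N as [|N IH].
  - assert (H := factor_bounds 0). change (partial_prod s t 0) with (1 - t ^ 2 / (s 0%nat) ^ 2).
    change (sum_inv_sq s 0) with (/ (s 0%nat) ^ 2). unfold Rdiv in H |- *. lra.
  - assert (H := factor_bounds (S N)). destruct IH as [[i1 i2] i3].
    change (partial_prod s t (S N)) with (partial_prod s t N * (1 - t ^ 2 / (s (S N)) ^ 2)).
    change (sum_inv_sq s (S N)) with (sum_inv_sq s N + / (s (S N)) ^ 2).
    unfold Rdiv in H |- *. rewrite Rmult_plus_distr_l.
    set (a := t ^ 2 * / s (S N) ^ 2) in *. split; [split|]; nra.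
Qed.

Lemma partial_prod_tail N k :
  0 <= partial_prod s t N - partial_prod s t (N + k) <= t ^ 2 * (sum_inv_sq s (N + k) - sum_inv_sq s N).
Proof.
  induction k as [|k IH].
  - rewrite Nat.add_0_r. lra.
  - rewrite Nat.add_succ_r.
    assert (H := factor_bounds (S (N + k))). destruct (partial_prod_bounds (N + k)) as [[i1 i2] i3].
    change (partial_prod s t (S (N + k)))
      with (partial_prod s t (N + k) * (1 - t ^ 2 / (s (S (N + k))) ^ 2)).
    change (sum_inv_sq s (S (N + k))) with (sum_inv_sq s (N + k) + / (s (S (N + k))) ^ 2).
    unfold Rdiv in H |- *. set (a := t ^ 2 * / s (S (N + k)) ^ 2) in *.
    replace (t ^ 2 * (sum_inv_sq s (N + k) + / s (S (N + k)) ^ 2 - sum_inv_sq s N))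
      with (t ^ 2 * (sum_inv_sq s (N + k) - sum_inv_sq s N) + a) by (unfold a; ring).
    nra.
Qed.

Lemma g_ge_1_sub : 1 - c * t ^ 2 <= g t.
Proof.
  assert (t2 : 0 <= t ^ 2) by apply pow2_ge_0.
  refine (is_lim_seq_le (fun _ => 1 - c * t ^ 2) (partial_prod s t) _ _ _
            (is_lim_seq_const _) (proj2 (is_lim_seq_Reals _ _) (prod_g t))).
  intros N. destruct (partial_prod_bounds N) as [_ h].
  assert (sum_inv_sq s N <= c) by apply sum_inv_sq_le. nra.
Qed.

Lemma g_sub_partial_prod N : Rabs (g t - partial_prod s t N) <= t ^ 2 * (c - sum_inv_sq s N).
Proof.
  assert (Hg := proj1 (is_lim_seq_incr_n _ N _) (proj2 (is_lim_seq_Reals _ _) (prod_g t))).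
  assert (t2 : 0 <= t ^ 2) by apply pow2_ge_0.
  assert (U := is_lim_seq_le (fun k => partial_prod s t (k + N)) (fun _ => partial_prod s t N) _ _
     ltac:(intros k; destruct (partial_prod_tail N k) as [h _]; rewrite Nat.add_comm; lra)
     Hg (is_lim_seq_const _)).
  assert (L := is_lim_seq_le (fun _ => partial_prod s t N - t ^ 2 * (c - sum_inv_sq s N))
     (fun k => partial_prod s t (k + N)) _ _
     ltac:(intros k; destruct (partial_prod_tail N k) as [_ h]; rewrite (Nat.add_comm k N);
           assert (sum_inv_sq s (N + k) <= c) by apply sum_inv_sq_le; nra)
     (is_lim_seq_const _) Hg).
  simpl in U, L. apply Rabs_le; lra.
Qed.

End InsideRadius.

Lemma partial_prod_continuous t N : continuous (fun x => partial_prod s x N) t.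
Proof.
  induction N as [|N IH].
  - apply (ex_derive_continuous (K := R_AbsRing) (V := R_NormedModule)). simpl. auto_derive; auto.
  - apply (continuous_mult (K := R_AbsRing) (fun x => partial_prod s x N)
             (fun x => 1 - x ^ 2 / (s (S N)) ^ 2)); auto.
    apply (ex_derive_continuous (K := R_AbsRing) (V := R_NormedModule)). auto_derive; auto.
Qed.

(* The partial products converge uniformly on |x| < 1/sqrt c, by g_sub_partial_prod. *)
Lemma g_continuous t : c * t ^ 2 < 1 -> continuous g t.
Proof.
  intros ht. assert (hc0 := sum_inv_sq_pos).
  assert (hsc : 0 < sqrt c) by (apply sqrt_lt_R0; auto).
  assert (hr : 0 < / sqrt c) by (apply Rinv_0_lt_compat; auto).
  assert (Ball : forall y, Rabs y < / sqrt c <-> c * y ^ 2 < 1).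
  { intros y. assert (E : c * y ^ 2 = (Rabs y * sqrt c) ^ 2)
      by (rewrite Rpow_mult_distr, pow2_abs, pow2_sqrt by lra; ring).
    rewrite E. assert (Hq : 0 <= Rabs y * sqrt c) by (apply Rmult_le_pos; [apply Rabs_pos | lra]).
    split; intros h.
    - apply (Rmult_lt_compat_r (sqrt c)) in h; [|lra]. rewrite Rinv_l in h by lra. nra.
    - assert (Rabs y * sqrt c < 1) by nra.
      apply (Rmult_lt_reg_r (sqrt c)); [lra|]. rewrite Rinv_l by lra. lra. }
  apply continuity_pt_filterlim.
  apply (CVU_continuity (fun n y => partial_prod s y n) g 0 (mkposreal _ hr)).
  - intros eps he.
    destruct (sum_c (eps * c)) as [N HN]; [apply Rmult_lt_0_compat; lra|].
    exists N. intros n y hn hy. unfold Boule in hy; simpl in hy. rewrite Rminus_0_r in hy.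
    apply Ball in hy. specialize (HN n hn). unfold Rdist in HN. apply Rabs_def2 in HN.
    assert (hle : sum_inv_sq s n <= c) by apply sum_inv_sq_le.
    assert (T := g_sub_partial_prod y ltac:(lra) n). assert (0 <= y ^ 2) by apply pow2_ge_0.
    apply Rle_lt_trans with (y ^ 2 * (c - sum_inv_sq s n)); auto. unfold sum_inv_sq in *. nra.
  - intros n y _. apply continuity_pt_filterlim, partial_prod_continuous.
  - unfold Boule; simpl. rewrite Rminus_0_r. apply Ball. exact ht.
Qed.

Section Moment.

Variables beta p : R.
Hypothesis beta_range : 0 <= beta < 1.
Hypothesis p_pos : 0 < p.

Lemma moment_integrand_continuous t : 0 < t -> c * t ^ 2 < 1 -> continuous (moment_integrand g beta p) t.
Proof.
  intros ht ht2. assert (glb := g_ge_1_sub t ltac:(lra)).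
  apply (continuous_mult (K := R_AbsRing) (fun x => rpow (Rabs (g x)) p) (fun x => / Rpower x beta)).
  - apply (continuous_comp (fun x => Rabs (g x)) (fun y => rpow y p)).
    + apply (continuous_comp g Rabs); [apply g_continuous; auto | apply continuous_Rabs].
    + apply rpow_continuous, Rabs_pos_lt. lra.
  - apply (continuous_Rinv_comp (fun x => Rpower x beta)); [apply continuous_Rpower; auto|].
    apply Rgt_not_eq, Rpower_pos.
Qed.

Lemma compact_ints_moment t1 t2 : 0 < t1 -> t1 <= t2 -> c * t2 ^ 2 < 1 ->
  compact_ints (moment_integrand g beta p) (RInt (moment_integrand g beta p) t1 t2).
Proof.
  intros ht1 ht12 ht2. assert (hc := sum_inv_sq_pos).
  assert (ex : ex_RInt (moment_integrand g beta p) t1 t2).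
  { apply (ex_RInt_continuous (V := R_CompleteNormedModule)). intros x hx.
    unfold Rmin, Rmax in hx; destruct (Rle_dec t1 t2); try lra.
    apply moment_integrand_continuous; [lra|].
    assert (x ^ 2 <= t2 ^ 2) by (apply pow_incr; lra). nra. }
  exists t1, t2, (ex_RInt_Reals_0 _ _ _ ex). split; [lra | apply RInt_Reals].
Qed.

Let a := (1 - beta) / 2.

Lemma beta_density_sq_le_moment y : 0 < y -> c * y ^ 2 < 1 ->
  2 * c * y * beta_density a (p + 1) (c * y ^ 2) <= 2 * Rpower c a * moment_integrand g beta p y.
Proof.
  intros hy hy1. assert (glb := g_ge_1_sub y ltac:(lra)). assert (hc := sum_inv_sq_pos).
  assert (0 < c * y ^ 2) by (apply Rmult_lt_0_compat, pow_lt; lra).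
  unfold moment_integrand, beta_density.
  rewrite rpow_eq_Rpower by (apply Rabs_pos_lt; lra). rewrite Rabs_right by lra.
  replace (p + 1 - 1) with p by ring.
  assert (EE : 2 * c * y * Rpower (c * y ^ 2) (a - 1) = 2 * Rpower c a * / Rpower y beta).
  { rewrite <- Rpower_Ropp. unfold Rpower. rewrite ln_mult, ln_pow by (try apply pow_lt; lra).
    replace (2 * c * y) with (2 * exp (ln c) * exp (ln y)) by (rewrite !exp_ln; lra).
    rewrite !Rmult_assoc, <- !exp_plus. do 2 f_equal. unfold a; simpl; field. }
  rewrite <- Rmult_assoc, EE.
  assert (Hp : Rpower (1 - c * y ^ 2) p <= Rpower (g y) p) by (apply Rle_Rpower_l; lra).
  assert (0 < 2 * Rpower c a * / Rpower y beta).
  { apply Rmult_lt_0_compat; [apply Rmult_lt_0_compat; [lra | apply Rpower_pos]|].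
    apply Rinv_0_lt_compat, Rpower_pos. }
  unfold Rdiv. nra.
Qed.

(* Substitution u = c t^2. *)
Lemma RInt_beta_density_le_moment t1 t2 : 0 < t1 <= t2 -> c * t2 ^ 2 < 1 ->
  RInt (beta_density a (p + 1)) (c * t1 ^ 2) (c * t2 ^ 2) <=
  2 * Rpower c a * RInt (moment_integrand g beta p) t1 t2.
Proof.
  intros ht ht2. assert (hc := sum_inv_sq_pos).
  assert (Hin : forall x, t1 <= x <= t2 -> 0 < c * x ^ 2 < 1).
  { intros x hx. split; [apply Rmult_lt_0_compat, pow_lt; lra|].
    assert (x ^ 2 <= t2 ^ 2) by (apply pow_incr; lra). nra. }
  rewrite RInt_comp_sq by (auto; intros u hu; apply beta_density_continuous;
                           assert (H1 := Hin t1 ltac:(lra)); assert (H2 := Hin t2 ltac:(lra)); lra).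
  rewrite <- (RInt_scal (V := R_CompleteNormedModule)).
  2:{ apply (ex_RInt_continuous (V := R_CompleteNormedModule)). intros x hx.
      unfold Rmin, Rmax in hx; destruct (Rle_dec t1 t2); try lra.
      apply moment_integrand_continuous; [lra | apply Hin; lra]. }
  apply RInt_le; try lra.
  - apply (ex_RInt_continuous (V := R_CompleteNormedModule)). intros x hx.
    unfold Rmin, Rmax in hx; destruct (Rle_dec t1 t2); try lra.
    apply (continuous_mult (K := R_AbsRing) (fun y => 2 * c * y) (fun y => beta_density a (p + 1) (c * y ^ 2))).
    + apply (ex_derive_continuous (K := R_AbsRing) (V := R_NormedModule)). auto_derive. auto.
    + apply (continuous_comp (fun y => c * y ^ 2) (beta_density a (p + 1))).
      * apply (ex_derive_continuous (K := R_AbsRing) (V := R_NormedModule)). auto_derive. auto.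
      * apply beta_density_continuous, Hin; lra.
  - apply (ex_RInt_scal (V := R_NormedModule)), (ex_RInt_continuous (V := R_CompleteNormedModule)).
    intros x hx. unfold Rmin, Rmax in hx; destruct (Rle_dec t1 t2); try lra.
    apply moment_integrand_continuous; [lra | apply Hin; lra].
  - intros y hy. apply beta_density_sq_le_moment; [lra | apply Hin; lra].
Qed.

Lemma int0inf_gt_of_Beta M : 2 * Rpower c a * M < Beta a (p + 1) ->
  int0inf_gt (moment_integrand g beta p) M.
Proof.
  intros hM. assert (hc := sum_inv_sq_pos).
  assert (hA : 0 < 2 * Rpower c a) by (apply Rmult_lt_0_compat; [lra | apply Rpower_pos]).
  destruct (is_RInt_gen_approx interval_ends_01 _ _ _ (is_RInt_gen_Beta a (p + 1) ltac:(unfold a; lra) ltac:(lra)) hM)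
    as [u1 [u2 [hu1 [hu2 [hu12 Hu]]]]].
  set (t1 := sqrt (u1 / c)). set (t2 := sqrt (u2 / c)).
  assert (E1 : c * t1 ^ 2 = u1) by (unfold t1; rewrite pow2_sqrt by (left; apply Rdiv_lt_0_compat; lra); field; lra).
  assert (E2 : c * t2 ^ 2 = u2) by (unfold t2; rewrite pow2_sqrt by (left; apply Rdiv_lt_0_compat; lra); field; lra).
  assert (ht1 : 0 < t1) by (apply sqrt_lt_R0, Rdiv_lt_0_compat; lra).
  assert (ht12 : t1 <= t2)
    by (apply sqrt_le_1_alt; unfold Rdiv; apply Rmult_le_compat_r; [left; apply Rinv_0_lt_compat|]; lra).
  assert (T := RInt_beta_density_le_moment t1 t2 ltac:(lra) ltac:(lra)). rewrite E1, E2 in T.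
  exists (RInt (moment_integrand g beta p) t1 t2). split.
  - apply compact_ints_moment; lra.
  - apply (Rmult_lt_reg_l (2 * Rpower c a)); lra.
Qed.

End Moment.

End WeierstrassProduct.


Lemma Rpower_succ_scaled_le p z : 0 < p -> 0 < z <= 1 -> p / (p + 1) * Rpower (p + 1) z <= Rpower p z.
Proof.
  intros hp hz.
  assert (hq : 0 < p / (p + 1) <= 1).
  { split; [apply Rdiv_lt_0_compat; lra|].
    apply (Rmult_le_reg_r (p + 1)); [lra|]. unfold Rdiv; rewrite Rmult_assoc, Rinv_l by lra. lra. }
  apply Rle_trans with (Rpower (p / (p + 1)) z * Rpower (p + 1) z).
  - apply Rmult_le_compat_r; [left; apply Rpower_pos | apply Rpower_ge_base; lra].
  - rewrite Rpower_mult_distr by lra. right. f_equal. field. lra.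
Qed.

Lemma Rpower_Beta_succ_eventually_gt z L : 0 < z <= 1 -> L < Gamma z ->
  exists P, forall p, P < p -> L < Rpower p z * Beta z (p + 1).
Proof.
  intros hz hL. set (L' := (L + Gamma z) / 2).
  destruct (Rpower_Beta_eventually_gt z L' ltac:(lra) ltac:(unfold L'; lra)) as [P1 H1].
  exists (Rmax 0 (Rmax P1 (Rabs L' / (L' - L)))). intros p hp.
  assert (h0 := Rmax_l 0 (Rmax P1 (Rabs L' / (L' - L)))).
  assert (h1 := Rmax_r 0 (Rmax P1 (Rabs L' / (L' - L)))).
  assert (h2 := Rmax_l P1 (Rabs L' / (L' - L))). assert (h3 := Rmax_r P1 (Rabs L' / (L' - L))).
  assert (HB := H1 (p + 1) ltac:(lra)).
  assert (HS := Rpower_succ_scaled_le p z ltac:(lra) hz).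
  assert (HB0 : 0 <= Beta z (p + 1)) by (apply Beta_ge_0; lra).
  assert (Hq : 0 < p / (p + 1)) by (apply Rdiv_lt_0_compat; lra).
  assert (Hgap : Rabs L' / (p + 1) < L' - L) by (apply div_lt_swap; unfold L' in *; lra).
  assert (HL : L < p / (p + 1) * L').
  { replace (p / (p + 1) * L') with (L' - L' / (p + 1)) by (field; lra).
    assert (L' / (p + 1) <= Rabs L' / (p + 1))
      by (unfold Rdiv; apply Rmult_le_compat_r; [left; apply Rinv_0_lt_compat; lra | apply Rle_abs]).
    lra. }
  apply Rlt_le_trans with (p / (p + 1) * (Rpower (p + 1) z * Beta z (p + 1))).
  - apply Rlt_trans with (p / (p + 1) * L'); [exact HL | apply Rmult_lt_compat_l; auto].
  - rewrite <- Rmult_assoc. apply Rmult_le_compat_r; auto.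
Qed.

Theorem mainTheorem8
  (s : nat -> R) (c : R) (g : R -> R) (beta : R)
  (Hpos : 0 < s O)
  (Hmono : forall n, s n <= s (S n))
  (Hc : infinite_sum (fun n => / (s n) ^ 2) c)
  (Hg : forall x, Un_cv (partial_prod s x) (g x))
  (Hbeta : 0 <= beta < 1) :
  (forall p, 0 < p ->
     forall M, M < / (2 * Rpower c ((1 - beta) / 2)) *
                   (Gamma (p + 1) * Gamma ((1 - beta) / 2)
                    / Gamma ((1 - beta) / 2 + p + 1)) ->
     int0inf_gt (fun x => rpow (Rabs (g x)) p / Rpower x beta) M)
  /\
  (forall M, M < Gamma ((1 - beta) / 2) / (2 * Rpower c ((1 - beta) / 2)) ->
     exists P, forall p, P < p ->
       int0inf_gt (fun x => rpow (Rabs (g x)) p / Rpower x beta)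
                  (M / Rpower p ((1 - beta) / 2))).
Proof.
  assert (hs : forall n, 0 < s n) by (induction n; [lra | specialize (Hmono n); lra]).
  set (a := (1 - beta) / 2). assert (ha : 0 < a <= 1) by (unfold a; lra).
  set (A := 2 * Rpower c a). assert (hA : 0 < A) by (unfold A; assert (H := Rpower_pos c a); lra).
  split.
  - intros p hp M hM. apply (int0inf_gt_of_Beta s c g hs Hc Hg beta p Hbeta hp M). fold a A.
    assert (HB := Gamma_ratio_le_Beta a (p + 1) ltac:(lra) ltac:(lra)).
    replace (a + p + 1) with (a + (p + 1)) in hM by ring.
    apply (Rmult_lt_compat_l A) in hM; [|lra].
    rewrite <- Rmult_assoc, Rinv_r, Rmult_1_l in hM by lra. lra.
  - intros M hM.
    assert (hAM : A * M < Gamma a)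
      by (apply (Rmult_lt_compat_l A) in hM; [|lra]; replace (A * (Gamma a / A)) with (Gamma a) in hM
            by (field; lra); exact hM).
    destruct (Rpower_Beta_succ_eventually_gt a (A * M) ha hAM) as [P HP].
    exists (Rmax 0 P). intros p hp. assert (h0 := Rmax_l 0 P). assert (h1 := Rmax_r 0 P).
    apply (int0inf_gt_of_Beta s c g hs Hc Hg beta p Hbeta ltac:(lra)). fold a A.
    assert (hpa : 0 < Rpower p a) by apply Rpower_pos.
    apply (Rmult_lt_reg_l (Rpower p a)); [exact hpa|].
    replace (Rpower p a * (A * (M / Rpower p a))) with (A * M) by (field; lra).
    apply HP; lra.
Qed.
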